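(* Let $P=\{x\in\mathbb{R}^n: Ax\ge b\}$ be full-dimensional and pointed, $\mathcal{I}\subseteq\{1,\dots,n\}$, $P_I=\{x\in P:x_j\in\mathbb{Z}\ \forall j\in\mathcal{I}\}$, and $c\in\mathbb{R}^n$. Let $\mathcal{T}$ be finite and $P^t=\{x\in P:D^tx\ge D^t_0\}$, $t\in\mathcal{T}$, the terms of a disjunction with $P_I\subseteq\operatorname{cl}\operatorname{conv}(\bigcup_tP^t)$. For each $t\in\mathcal{T}$, let $\mathcal{P}^t$ consist of an optimal (vertex) solution $p^t$ to $\min\{c^\top x:x\in P^t\}$ together with one point on each of the edges of $P^t$ emanating from $p^t$. Let $\mathcal{P}=\bigcup_t\mathcal{P}^t$ and $\mathcal{R}=\emptyset$. Then any $(\alpha,\beta)$ satisfying $\alpha^\top p\ge\beta$ for all $p\in\mathcal{P}$ and additionally $\alpha^\top p^t=\beta$ for all $t\in\mathcal{T}$ yields an inequality $\alpha^\top x\ge\beta$ that is valid for $P_I$. *)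

(* Vectors of R^n are column vectors 'cV[R]_n,
   R : realType; the topology on 'cV[R]_n is the canonical (product/max-norm) one. *)
From HB Require Import structures.
From mathcomp Require Import all_boot all_order all_algebra.
From mathcomp Require Import all_classical all_reals all_analysis.
Set Implicit Arguments. Unset Strict Implicit. Unset Printing Implicit Defensive.
Import Order.TTheory GRing.Theory Num.Theory.
Import numFieldTopology.Exports numFieldNormedType.Exports.
Local Open Scope ring_scope.
Local Open Scope classical_set_scope.

Section Polyhedra.
Variable R : realType.

Definition dotv (n : nat) (a x : 'cV[R]_n) : R := \sum_(i < n) a i 0 * x i 0.

Definition mxge (m n : nat) (M : 'M[R]_(m, n)) (d : 'cV[R]_m) (x : 'cV[R]_n) : Prop :=
  forall i : 'I_m, d i 0 <= (M *m x) i 0.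

Definition polyh (m n : nat) (A : 'M[R]_(m, n)) (b : 'cV[R]_m) : set 'cV[R]_n :=
  [set x | mxge A b x].

Definition convex_hull (n : nat) (S : set 'cV[R]_n) : set 'cV[R]_n :=
  [set x | exists (k : nat) (lam : 'I_k -> R) (y : 'I_k -> 'cV[R]_n),
      (forall i, 0 <= lam i) /\ \sum_(i < k) lam i = 1 /\
      (forall i, S (y i)) /\ x = \sum_(i < k) lam i *: y i].

(* dimension n : Q contains n+1 affinely independent points *)
Definition full_dimensional (n : nat) (Q : set 'cV[R]_n) : Prop :=
  exists (x0 : 'cV[R]_n) (V : 'M[R]_n),
    Q x0 /\ (forall j : 'I_n, Q (x0 + col j V)) /\ V \in unitmx.

Definition pointed (n : nat) (Q : set 'cV[R]_n) : Prop :=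
  ~ exists (x d : 'cV[R]_n), d != 0 /\ forall lam : R, Q (x + lam *: d).

Definition valid_ineq (n : nat) (Q : set 'cV[R]_n) (a : 'cV[R]_n) (beta : R) : Prop :=
  forall x, Q x -> beta <= dotv a x.

Definition face (n : nat) (Q F : set 'cV[R]_n) : Prop :=
  F !=set0 /\ exists (a : 'cV[R]_n) (beta : R),
    valid_ineq Q a beta /\ F = [set x | Q x /\ dotv a x = beta].

(* an edge: a face of (affine) dimension 1, i.e. F has two distinct points
   and is contained in the line through them *)
Definition edge (n : nat) (Q F : set 'cV[R]_n) : Prop :=
  face Q F /\ exists u v : 'cV[R]_n, F u /\ F v /\ u != v /\
    (forall x, F x -> exists lam : R, x = u + lam *: (v - u)).

Definition vertex (n : nat) (Q : set 'cV[R]_n) (p : 'cV[R]_n) : Prop :=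
  face Q [set p].

End Polyhedra.

From HB Require Import structures.
From mathcomp Require Import all_boot all_order all_algebra.
From mathcomp Require Import all_classical all_reals all_analysis.
From mathcomp Require Import lra zify.
Set Implicit Arguments. Unset Strict Implicit. Unset Printing Implicit Defensive.
Import Order.TTheory GRing.Theory Num.Theory.
Import numFieldTopology.Exports numFieldNormedType.Exports.
Local Open Scope ring_scope.
Local Open Scope classical_set_scope.

(* The heart of the proof is the optimality criterion of the simplex method:
   a vertex p of Q = {x | a_i x >= h_i} that is no worse for alpha than one
   point on each edge of Q at p minimizes alpha over Q.  Otherwise some x in Q
   has alpha x < alpha p, so x - p is a descent direction in the cone cut out
   by the constraints active at p.  Pivoting inside this cone, each step making
   one more active constraint tight, reaches a descent direction y whose tight
   constraints, together with alpha, leave no freedom: they cut out an edge of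
   Q at p along y, and the given point on that edge forces y = 0.
   Hence alpha x >= beta holds on every term P^t; it passes to the convex hull
   of their union and to its closure, which contains P_I. *)

Section Polyhedra.
Variable R : realType.

Lemma ex_pos_lower_bound (I : finType) (P : pred I) (f : I -> R) :
  (forall i, P i -> 0 < f i) -> exists2 e, 0 < e & forall i, P i -> e <= f i.
Proof.
move=> f_gt0; case: (pickP P) => [i0 Pi0|P0]; last by exists 1 => // i; rewrite P0.
by case: (arg_minP f Pi0) => i Pi f_min; exists (f i); [exact: f_gt0 | exact: f_min].
Qed.

Section Dotv.
Variable n : nat.
Implicit Types a x y : 'cV[R]_n.

Lemma dotvDr a x y : dotv a (x + y) = dotv a x + dotv a y.
Proof. by rewrite /dotv -big_split; apply: eq_bigr => i _; rewrite mxE mulrDr. Qed.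

Lemma dotvZr a k x : dotv a (k *: x) = k * dotv a x.
Proof. by rewrite /dotv mulr_sumr; apply: eq_bigr => i _; rewrite mxE mulrCA. Qed.

Lemma dotvNr a x : dotv a (- x) = - dotv a x.
Proof. by rewrite -scaleN1r dotvZr mulN1r. Qed.

Lemma dotvBr a x y : dotv a (x - y) = dotv a x - dotv a y.
Proof. by rewrite dotvDr dotvNr. Qed.

Lemma dotv0r a : dotv a 0 = 0.
Proof. by rewrite -(scale0r 0) dotvZr mul0r. Qed.

Lemma dotv_sumr a k (f : 'I_k -> 'cV[R]_n) :
  dotv a (\sum_(i < k) f i) = \sum_(i < k) dotv a (f i).
Proof.
by rewrite /dotv exchange_big; apply: eq_bigr => j _; rewrite summxE mulr_sumr.
Qed.

Lemma dotv_suml (I : finType) (S : {set I}) (f : I -> 'cV[R]_n) x :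
  dotv (\sum_(i in S) f i) x = \sum_(i in S) dotv (f i) x.
Proof.
by rewrite /dotv exchange_big; apply: eq_bigr => j _; rewrite summxE mulr_suml.
Qed.

Lemma dotv_continuous a : continuous (dotv a).
Proof.
have -> : dotv a = \sum_(i < n) (fun x : 'cV[R]_n => a i 0 * x i 0).
  by rewrite fct_sumE /dotv.
apply: (big_ind (fun f : 'cV[R]_n -> R => continuous f)).
- by move=> x; exact: cst_continuous.
- by move=> f g f_cont g_cont x; exact: (continuousD (f_cont x) (g_cont x)).
move=> i _ x; apply: continuousM; first exact: cst_continuous.
exact: coord_continuous.
Qed.

Lemma valid_ineq_convex_hull (S : set 'cV[R]_n) a beta :
  valid_ineq S a beta -> valid_ineq (convex_hull S) a beta.
Proof.
move=> S_ge _ [k [lam [y [lam_ge0 [lam_sum1 [S_y ->]]]]]].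
rewrite dotv_sumr -[beta]mul1r -lam_sum1 mulr_suml.
by apply: ler_sum => i _; rewrite dotvZr ler_wpM2l // S_ge.
Qed.

Lemma valid_ineq_closure (S : set 'cV[R]_n) a beta :
  valid_ineq S a beta -> valid_ineq (closure S) a beta.
Proof.
move=> S_ge x /(closureS (S_ge : S `<=` [set x | beta <= dotv a x])).
rewrite -(closure_id _).1 //.
apply: (preimage_closed (f := dotv a) (D := [set r | beta <= r])); last first.
  exact: closed_ge.
by move=> y _; exact: dotv_continuous.
Qed.

End Dotv.

Lemma face_sub n (Q F : set 'cV[R]_n) : face Q F -> F `<=` Q.
Proof. by case=> _ [a [beta [_ ->]]] x []. Qed.

Lemma vertex_mem n (Q : set 'cV[R]_n) p : vertex Q p -> Q p.
Proof. by move/face_sub; apply. Qed.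

Lemma vertex_segment n (Q : set 'cV[R]_n) p z e1 e2 : vertex Q p ->
  0 < e1 -> 0 < e2 -> Q (p + e1 *: z) -> Q (p - e2 *: z) -> z = 0.
Proof.
move=> [_ [a [beta [a_valid Fp]]]] e1_gt0 e2_gt0 Q1 Q2.
have [_ a_p] : [set x | Q x /\ dotv a x = beta] p by rewrite -Fp.
have ge1 := a_valid _ Q1; have ge2 := a_valid _ Q2.
rewrite dotvDr dotvZr a_p in ge1; rewrite dotvBr dotvZr a_p in ge2.
have a_z : dotv a z = 0 by nra.
have : [set p] (p + e1 *: z).
  by rewrite Fp; split=> //; rewrite dotvDr dotvZr a_z mulr0 addr0.
move=> /= /eqP; rewrite -{2}[p]addr0 (inj_eq (addrI p)) scaler_eq0 gt_eqF //=.
by move/eqP.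
Qed.

Section InequalitySystem.
Variables (n : nat) (I : finType) (a : I -> 'cV[R]_n) (h : I -> R).

Definition ineq_set : set 'cV[R]_n := [set x | forall i, h i <= dotv (a i) x].

Definition tight_face (S : {set I}) : set 'cV[R]_n :=
  [set x | ineq_set x /\ forall i, i \in S -> dotv (a i) x = h i].

Lemma face_tight_face S : tight_face S !=set0 -> face ineq_set (tight_face S).
Proof.
move=> S_ne; split=> //; exists (\sum_(i in S) a i), (\sum_(i in S) h i); split.
  by move=> x x_in; rewrite dotv_suml; apply: ler_sum => i _.
apply/seteqP; split=> x [x_in x_S]; split=> //.
  by rewrite dotv_suml; apply: eq_bigr => i /x_S.
move: x_S; rewrite dotv_suml => /eqP; rewrite -subr_eq0 -sumrB => /eqP slack0 i iS.
have slack_ge0 j : j \in S -> 0 <= dotv (a j) x - h j by rewrite subr_ge0.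
by apply/eqP; rewrite -subr_eq0 (psumr_eq0P slack_ge0 slack0 iS).
Qed.

Lemma feasible_step x y : ineq_set x ->
  (forall i, dotv (a i) x = h i -> 0 <= dotv (a i) y) ->
  exists2 e, 0 < e & ineq_set (x + e *: y).
Proof.
move=> x_in y_feas.
have slack_gt0 i : dotv (a i) y < 0 -> 0 < (dotv (a i) x - h i) / - dotv (a i) y.
  move=> y_i; rewrite divr_gt0 ?oppr_gt0 // subr_gt0 lt_def x_in andbT.
  by apply: contraTneq y_i => /y_feas; rewrite leNgt => /negbTE ->.
have [e e_gt0 e_le] := ex_pos_lower_bound (P := fun i => dotv (a i) y < 0) slack_gt0.
exists e => // i; rewrite dotvDr dotvZr.
have [y_i|y_i] := ltP (dotv (a i) y) 0.
  by have := e_le i y_i; rewrite ler_pdivlMr ?oppr_gt0 //; lra.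
by have := x_in i; have := mulr_ge0 (ltW e_gt0) y_i; lra.
Qed.

Section Descent.
Variables (p alpha : 'cV[R]_n).
Hypothesis p_vertex : vertex ineq_set p.

Definition active i := dotv (a i) p == h i.

Definition descent y := (forall i, active i -> 0 <= dotv (a i) y) /\ dotv alpha y < 0.

Definition tight y : {set I} := [set i | active i && (dotv (a i) y == 0)].

Lemma in_tight y i : (i \in tight y) = active i && (dotv (a i) y == 0).
Proof. by rewrite inE. Qed.

Definition full_rank_tight y := forall z,
  (forall i, i \in tight y -> dotv (a i) z = 0) -> dotv alpha z = 0 -> z = 0.

Lemma vertex_active_kernel z : (forall i, active i -> dotv (a i) z = 0) -> z = 0.
Proof.
move=> z_act; have p_in := vertex_mem p_vertex.
have stay w : (forall i, active i -> dotv (a i) w = 0) ->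
    exists2 e, 0 < e & ineq_set (p + e *: w).
  by move=> w_act; apply: feasible_step p_in _ => i /eqP/w_act ->.
have [e1 e1_gt0 Q1] := stay z z_act.
have [e2 e2_gt0 Q2] : exists2 e, 0 < e & ineq_set (p + e *: - z).
  by apply: stay => i /z_act; rewrite dotvNr => ->; rewrite oppr0.
by apply: vertex_segment p_vertex e1_gt0 e2_gt0 Q1 _; rewrite -scalerN.
Qed.

Lemma descent_pivot_neg y z i0 : descent y ->
  (forall i, i \in tight y -> dotv (a i) z = 0) -> dotv alpha z = 0 ->
  active i0 -> dotv (a i0) z < 0 ->
  exists2 y', descent y' & (#|tight y| < #|tight y'|)%N.
Proof.
move=> [y_feas y_desc] z_tight z_alpha act_i0 z_i0.
pose blocking i := active i && (dotv (a i) z < 0).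
pose step i := dotv (a i) y / - dotv (a i) z.
have blocking_i0 : blocking i0 by rewrite /blocking act_i0 z_i0.
have [j /andP[act_j z_j] step_min] := arg_minP step blocking_i0.
have y_j : 0 < dotv (a j) y.
  rewrite lt_def y_feas // andbT; apply: contraTneq z_j => y_j0.
  by rewrite z_tight ?ltxx // in_tight act_j y_j0 eqxx.
pose mu := step j.
have mu_gt0 : 0 < mu by rewrite divr_gt0 ?oppr_gt0.
exists (y + mu *: z).
  split; last by rewrite dotvDr dotvZr z_alpha mulr0 addr0.
  move=> i act_i; rewrite dotvDr dotvZr.
  have [z_i|z_i] := ltP (dotv (a i) z) 0.
    have := step_min i; rewrite /blocking act_i z_i => /(_ isT).
    rewrite ler_pdivlMr ?oppr_gt0 // -/mu mulrN.
    by have := y_feas i act_i; lra.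
  by have := y_feas i act_i; have := mulr_ge0 (ltW mu_gt0) z_i; lra.
apply: proper_card; apply/properP; split.
  apply/fintype.subsetP => i; rewrite !in_tight => /andP[act_i /eqP y_i].
  have i_tight : i \in tight y by rewrite in_tight act_i y_i eqxx.
  by rewrite act_i dotvDr dotvZr y_i (z_tight i i_tight) mulr0 addr0 eqxx.
exists j; last by rewrite in_tight act_j gt_eqF.
rewrite in_tight act_j dotvDr dotvZr /mu /step invrN mulrN mulNr divfK ?subrr ?eqxx //.
by rewrite lt_eqF.
Qed.

Lemma descent_pivot y : descent y -> ~ full_rank_tight y ->
  exists2 y', descent y' & (#|tight y| < #|tight y'|)%N.
Proof.
move=> y_desc /existsNP[z] /not_implyP[z_tight] /not_implyP[z_alpha z_neq0].
have [i0 act_i0 z_i0] : exists2 i0, active i0 & dotv (a i0) z != 0.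
  apply: contra_notP z_neq0 => no_i0; apply: vertex_active_kernel => i act_i.
  by apply/eqP/negPn/negP => z_i; apply: no_i0; exists i.
case: (ltgtP (dotv (a i0) z) 0) z_i0 => // [z_i0|z_i0] _.
  exact: descent_pivot_neg y_desc z_tight z_alpha act_i0 z_i0.
apply: (descent_pivot_neg (z := - z) y_desc _ _ act_i0).
- by move=> i /z_tight; rewrite dotvNr => ->; rewrite oppr0.
- by rewrite dotvNr z_alpha oppr0.
- by rewrite dotvNr oppr_lt0.
Qed.

Lemma descent_full_rank y : descent y -> exists2 y', descent y' & full_rank_tight y'.
Proof.
move=> y_desc; have [k] := ubnP (#|I| - #|tight y|)%N.
elim: k y y_desc => // k IH y y_desc lt_k.
have [y_full|y_not_full] := pselect (full_rank_tight y); first by exists y.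
have [y' y'_desc lt_tight] := descent_pivot y_desc y_not_full.
by apply: IH y'_desc _; have := max_card (tight y'); lia.
Qed.

Lemma full_rank_descent_edge y : descent y -> full_rank_tight y ->
  exists E, [/\ edge ineq_set E, E p & forall x, E x -> exists c, x = p + c *: y].
Proof.
move=> [y_feas y_desc] y_full.
have p_in := vertex_mem p_vertex.
have y_neq0 : y != 0 by apply: contraTneq y_desc => ->; rewrite dotv0r ltxx.
have tight_p i : i \in tight y -> dotv (a i) p = h i by rewrite in_tight => /andP[/eqP].
have tight_y i : i \in tight y -> dotv (a i) y = 0 by rewrite in_tight => /andP[_ /eqP].
have p_face : tight_face (tight y) p by split.
have on_line x : tight_face (tight y) x ->
    x = p + (dotv alpha (x - p) / dotv alpha y) *: y.
  move=> [_ x_tight]; set c := _ / _.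
  apply/eqP; rewrite addrC -subr_eq -subr_eq0; apply/eqP; apply: y_full.
    move=> i i_tight.
    by rewrite !dotvBr dotvZr x_tight // tight_p // tight_y // mulr0 !subrr.
  by rewrite dotvBr dotvZr /c divfK ?subrr // lt_eqF.
have [e e_gt0 pe_in] := feasible_step p_in (fun i act_i => y_feas i (introT eqP act_i)).
exists (tight_face (tight y)); split=> //; last by move=> x /on_line ->; eexists.
split; first by apply: face_tight_face; exists p.
exists p, (p + e *: y); split=> //; split; [|split].
- by split=> // i i_tight; rewrite dotvDr dotvZr tight_p // tight_y // mulr0 addr0.
- by rewrite -{1}[p]addr0 (inj_eq (addrI p)) eq_sym scaler_eq0 negb_or gt_eqF.
move=> x /on_line ->; exists (dotv alpha (x - p) / dotv alpha y / e).
by rewrite addrAC subrr add0r scalerA divfK ?gt_eqF.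
Qed.

Theorem vertex_edge_optimal :
  (forall E, edge ineq_set E -> E p ->
    exists q, [/\ E q, q != p & dotv alpha p <= dotv alpha q]) ->
  valid_ineq ineq_set alpha (dotv alpha p).
Proof.
move=> edge_ge x x_in; rewrite leNgt; apply/negP => better.
have [y [y_feas y_desc] y_full] : exists2 y, descent y & full_rank_tight y.
  apply: (descent_full_rank (y := x - p)); split; last by rewrite dotvBr subr_lt0.
  by move=> i /eqP act_i; rewrite dotvBr act_i subr_ge0.
have [E [E_edge E_p E_line]] := full_rank_descent_edge (conj y_feas y_desc) y_full.
have [q [E_q q_neq_p q_ge]] := edge_ge E E_edge E_p.
have [c q_eq] := E_line q E_q.
have c_lt0 : c < 0.
  have c_neq0 : c != 0 by apply: contra_neq q_neq_p => c0; rewrite q_eq c0 scale0r addr0.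
  rewrite lt_neqAle c_neq0 /=; move: q_ge; rewrite q_eq dotvDr dotvZr; nra.
suff y0 : y = 0 by move: y_desc; rewrite y0 dotv0r ltxx.
apply: vertex_active_kernel => i act_i; apply/eqP; rewrite eq_le y_feas // andbT.
have := face_sub E_edge.1 E_q i; rewrite q_eq dotvDr dotvZr (eqP act_i); nra.
Qed.

End Descent.
End InequalitySystem.

Lemma polyh_rows m n (M : 'M[R]_(m, n)) d :
  polyh M d = ineq_set (fun i => (row i M)^T) (fun i => d i 0).
Proof.
have row_dotv x i : (M *m x) i 0 = dotv (row i M)^T x.
  by rewrite mxE; apply: eq_bigr => j _; rewrite !mxE.
by apply/seteqP; split=> x x_in i; [rewrite -row_dotv | rewrite row_dotv]; apply: x_in.
Qed.

Lemma polyh_col_mx m1 m2 n (M1 : 'M[R]_(m1, n)) (M2 : 'M[R]_(m2, n)) d1 d2 :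
  polyh (col_mx M1 M2) (col_mx d1 d2) = polyh M1 d1 `&` polyh M2 d2.
Proof.
apply/seteqP; split=> x; rewrite /polyh /mxge /= mul_col_mx.
  move=> x_in; split=> i.
    by have := x_in (lshift m2 i); rewrite !col_mxEu.
  by have := x_in (rshift m1 i); rewrite !col_mxEd.
move=> [x_in1 x_in2] i; rewrite -(fintype.splitK i).
by case: (fintype.split i) => j; rewrite ?col_mxEu ?col_mxEd.
Qed.

End Polyhedra.

Theorem theorem4 (R : realType) (n m : nat) (A : 'M[R]_(m, n)) (b : 'cV[R]_m)
  (I : {set 'I_n}) (c : 'cV[R]_n)
  (T : finType) (mt : T -> nat)
  (D : forall t : T, 'M[R]_(mt t, n)) (D0 : forall t : T, 'cV[R]_(mt t))
  (p : T -> 'cV[R]_n) (q : T -> set 'cV[R]_n -> 'cV[R]_n)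
  (alpha : 'cV[R]_n) (beta : R) :
  let P := polyh A b in
  let PI := [set x | P x /\ forall j, j \in I -> x j 0 \is a Num.int] in
  let Pt := fun t => [set x | P x /\ mxge (D t) (D0 t) x] in
  let calP := \bigcup_(t in [set: T])
      ([set p t] `|` [set q t E | E in [set E | edge (Pt t) E /\ E (p t)]]) in
  full_dimensional P ->
  pointed P ->
  PI `<=` closure (convex_hull (\bigcup_(t in [set: T]) Pt t)) ->
  (forall t, vertex (Pt t) (p t) /\
             (forall x, Pt t x -> dotv c (p t) <= dotv c x)) ->
  (forall t E, edge (Pt t) E -> E (p t) -> E (q t E) /\ q t E != p t) ->
  (forall y, calP y -> beta <= dotv alpha y) ->
  (forall t, dotv alpha (p t) = beta) ->
  forall x, PI x -> beta <= dotv alpha x.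
Proof.
move=> P PI Pt calP _ _ PI_hull p_vertex q_edge calP_ge p_beta x PI_x.
have Pt_ge t : valid_ineq (Pt t) alpha beta.
  have Pt_rows : Pt t = ineq_set (fun i => (row i (col_mx A (D t)))^T)
                                 (fun i => col_mx b (D0 t) i 0).
    by rewrite -polyh_rows polyh_col_mx.
  rewrite Pt_rows -(p_beta t); apply: vertex_edge_optimal; rewrite -Pt_rows.
    exact: (p_vertex t).1.
  move=> E E_edge E_p; have [E_q q_neq_p] := q_edge t E E_edge E_p.
  exists (q t E); split=> //; rewrite p_beta; apply: calP_ge.
  by exists t => //; right; exists E.
apply: valid_ineq_closure (PI_hull _ PI_x).
by apply: valid_ineq_convex_hull => y [t _]; exact: Pt_ge.
Qed.
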